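(* Let $Z$ and $V$ be real Banach spaces, let $D \subset Z$ be open, let $F: D \to V$, and let $r \in D$ satisfy $F(r) = 0$. Suppose $F$ is semismooth at $r$ with Newton derivative $H: D \to L(Z,V)$ on an open neighbourhood $N \subset D$ of $r$ (in the sense defined in the context). Further assume that $H(z)$ is invertible for every $z \in N$ and that $\{\|H(z)^{-1}\| : z \in N\}$ has a finite upper bound $\Gamma$. Let $p \ge 1$. Then each of the operators $$M(z;r) = \frac{\mathcal{I}_V}{\|z-r\|_Z^p} \qquad\text{and}\qquad M(z;r) = \left(\frac{1}{\|z-r\|_Z^p} + 1\right)\mathcal{I}_V, \qquad z \in Z\setminus\{r\},$$ where $\mathcal{I}_V$ is the identity map on $V$, is a deflation operator for $F$ at $r$; that is, $M(z;r) \in L(V,V)$ is invertible for all $z \neq r$ in a neighbourhood of $r$, and $$\liminf_{z \to r} \|M(z;r)F(z)\|_V > 0.$$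
   Context: Semismoothness: $F: D \subset Z \to V$ ($D$ open) is semismooth at $z \in D$ if it is locally Lipschitz continuous at $z$ and there exist an open neighbourhood $N \subset D$ containing $z$ and a mapping $H: D \to L(Z,V)$ (a Newton derivative) such that $F(w+h) - F(w) - H(w+h)h = o(\|h\|_Z)$ as $h \to 0$, for all $w \in N$. A deflation operator for $F$ at a root $r$ is a map $M(\cdot;r): Z\setminus\{r\} \to L(V,V)$ such that $M(z;r)$ is invertible for all $z \ne r$ in a neighbourhood of $r$ and $\liminf_{z\to r}\|M(z;r)F(z)\|_V > 0$. *)

From HB Require Import structures.
From mathcomp Require Import all_boot all_order all_algebra.
From mathcomp Require Import all_classical all_reals all_analysis.
Set Implicit Arguments. Unset Strict Implicit. Unset Printing Implicit Defensive.
Import Order.TTheory GRing.Theory Num.Theory.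
Import numFieldNormedType.Exports.
Local Open Scope classical_set_scope.
Local Open Scope ring_scope.

Section Ops.
Variable R : realType.

Definition bounded_linear (U W : normedModType R) (f : U -> W) : Prop :=
  linear f /\ continuous f.

Definition inverse_op (U W : normedModType R) (A : U -> W) (B : W -> U) : Prop :=
  bounded_linear B /\ cancel A B /\ cancel B A.

Definition invertible_op (U W : normedModType R) (A : U -> W) : Prop :=
  exists B : W -> U, inverse_op A B.

Definition opnorm (U W : normedModType R) (B : U -> W) : \bar R :=
  ereal_sup [set (`|B v|)%:E | v in [set v : U | `|v| <= 1]].

Definition locally_lipschitz_at (U W : normedModType R) (F : U -> W) (z : U) : Prop :=
  exists2 Nz : set U, nbhs z Nz & [lipschitz F x | x in Nz].

Definition newton_derivative_on (U W : normedModType R) (D N : set U)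
    (F : U -> W) (H : U -> U -> W) : Prop :=
  (forall z, D z -> bounded_linear (H z)) /\
  (forall w, N w ->
     (fun h : U => F (w + h) - F w - H (w + h) h) =o_ (0 : U) (fun h : U => `|h|)).

Definition semismooth_at_with (U W : normedModType R) (D : set U) (F : U -> W)
    (z : U) (N : set U) (H : U -> U -> W) : Prop :=
  [/\ locally_lipschitz_at F z, open N, N z, N `<=` D &
      newton_derivative_on D N F H].

Definition deflation_operator (U W : normedModType R) (M : U -> W -> W)
    (F : U -> W) (r : U) : Prop :=
  [/\ (forall z, z != r -> bounded_linear (M z)),
      (\forall z \near r, z != r -> invertible_op (M z)) &
      (0 < limf_einf (fun z => (`|M z (F z)|)%:E) (r^'))%E].

End Ops.

From HB Require Import structures.
From mathcomp Require Import all_boot all_order all_algebra.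
From mathcomp Require Import all_classical all_reals all_analysis.
From mathcomp Require Import lra.
Import Order.TTheory GRing.Theory Num.Theory.
Import numFieldNormedType.Exports.
Local Open Scope classical_set_scope.
Local Open Scope ring_scope.

Set Implicit Arguments.
Unset Strict Implicit.
Unset Printing Implicit Defensive.

(* With h = z - r, the Newton condition at w = r reads F z = H z h + o(|h|),
   while the uniform bound on the inverses gives |h| <= Gamma |H z h|.  Hence
   F grows at least linearly near its root, |F z| >= c |z - r|, and since
   |z - r|^p <= |z - r| when |z - r| <= 1 <= p, both deflated residuals stay
   above c. *)

Section Deflation.
Variable R : realType.

Lemma scaler_bounded_linear (W : normedModType R) (c : R) :
  bounded_linear (fun v : W => c *: v).
Proof.
split; last exact: scaler_continuous.
by move=> a u v; rewrite scalerDr !scalerA mulrC.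
Qed.

Lemma scaler_invertible_op (W : normedModType R) (c : R) : c != 0 ->
  invertible_op (fun v : W => c *: v).
Proof.
move=> c0; exists (fun v : W => c^-1 *: v); split; first exact: scaler_bounded_linear.
by split=> v; rewrite scalerA ?mulVf ?mulfV // scale1r.
Qed.

Lemma opnorm_ler (U W : normedModType R) (B : W -> U) (G : R) :
  linear B -> (opnorm B <= G%:E)%E -> forall v, `|B v| <= G * `|v|.
Proof.
move=> /scalable_linear Bscale BG v; have [->|v0] := eqVneq v 0.
  by have := Bscale 0 0; rewrite /= !scale0r => ->; rewrite !normr0 mulr0.
have v_gt0 : 0 < `|v| by rewrite normr_gt0.
have : (`|B (`|v|^-1 *: v)|%:E <= G%:E)%E.
  apply: le_trans BG; apply: ereal_sup_ubound; exists (`|v|^-1 *: v) => //=.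
  by rewrite normrZ ger0_norm ?invr_ge0 // mulVf ?gt_eqF.
by rewrite lee_fin Bscale normrZ ger0_norm ?invr_ge0 // ler_pdivrMl // mulrC.
Qed.

Lemma inverse_op_norm_ge (U W : normedModType R) (A : U -> W) (B : W -> U) (G : R) :
  inverse_op A B -> (opnorm B <= G%:E)%E -> forall h, `|h| <= G * `|A h|.
Proof. by move=> [[Blin _] [AK _]] BG h; rewrite -{1}(AK h); exact: opnorm_ler. Qed.

Lemma limf_einf_ge_near (U : normedModType R) (f : U -> \bar R) (r : U) (a : R) :
  (\forall z \near r, z != r -> (a%:E <= f z)%E) -> (a%:E <= limf_einf f r^')%E.
Proof.
move=> af; rewrite limf_einfE.
set S := [set z | z != r /\ (a%:E <= f z)%E].
apply: (@le_trans _ _ (ereal_inf (f @` S))).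
  by apply/ereal_infP => _ [z [_ ?] <-].
apply: ereal_sup_ubound; exists S => //.
by apply: filterS af => z az zr; split => //; exact: az.
Qed.

Lemma deflation_operator_scaler (U W : normedModType R) (m : U -> R)
    (F : U -> W) (r : U) (c : R) :
  (forall z, z != r -> m z != 0) -> 0 < c ->
  (\forall z \near r, z != r -> c <= `|m z| * `|F z|) ->
  deflation_operator (fun z (v : W) => m z *: v) F r.
Proof.
move=> m_neq0 c_gt0 near_c; split.
- by move=> z _; exact: scaler_bounded_linear.
- by apply: nearW => z /m_neq0; exact: scaler_invertible_op.
- apply: (@lt_le_trans _ _ c%:E); first by rewrite lte_fin.
  by apply: limf_einf_ge_near; apply: filterS near_c => z cz /cz; rewrite lee_fin normrZ.
Qed.

Lemma newton_root_linear_lower_bound (U W : normedModType R) (F : U -> W)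
    (A : U -> U -> W) (r : U) (G : R) :
  F r = 0 ->
  (fun h : U => F (r + h) - F r - A (r + h) h) =o_ (0 : U) (fun h : U => `|h|) ->
  (\forall z \near r, forall h, `|h| <= G * `|A z h|) ->
  exists2 c, 0 < c & \forall z \near r, c * `|z - r| <= `|F z|.
Proof.
move=> Fr0 /eqoP newton A_lb.
pose G1 := Num.max G 1; pose c := (2 * G1)^-1.
have G1_gt0 : 0 < G1 by rewrite lt_max ltr01 orbT.
have G_le : G <= G1 by rewrite le_max lexx.
have c_gt0 : 0 < c by rewrite invr_gt0 mulr_gt0.
have G1c : G1 * c = 2^-1 by rewrite /c invfM mulrCA mulfV ?gt_eqF ?mulr1.
have small_rem : \forall z \near r, `|F z - A z (z - r)| <= c * `|z - r|.
  apply/nbhs0P; apply: filterS (newton c c_gt0) => h /=.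
  by rewrite [r + h - r]addrC addKr Fr0 subr0 normr_id.
exists c => //; near=> z.
have zA : `|z - r| <= G1 * `|A z (z - r)|.
  apply: le_trans (ler_wpM2r (normr_ge0 _) G_le).
  by move: (z - r); near: z.
have AF : `|A z (z - r)| <= `|F z| + c * `|z - r|.
  rewrite -[A z _](subKr (F z)); apply: le_trans (ler_normB _ _) _.
  by rewrite lerD2l; near: z.
suff : `|z - r| <= G1 * `|F z| + 2^-1 * `|z - r|.
  by rewrite -ler_pdivlMl // invrK; lra.
rewrite -G1c -mulrA -mulrDr; apply: le_trans zA _.
by rewrite ler_wpM2l // ltW.
Unshelve. all: by end_near.
Qed.

Lemma deflated_residual_ge (U W : normedModType R) (F : U -> W) (r : U) (c p : R) :
  0 <= c -> 1 <= p ->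
  (\forall z \near r, c * `|z - r| <= `|F z|) ->
  \forall z \near r, z != r -> c <= (`|z - r| `^ p)^-1 * `|F z|.
Proof.
move=> c_ge0 p_ge1 F_ge; near=> z => zr.
have d_gt0 : 0 < `|z - r| by rewrite normr_gt0 subr_eq0.
have d_le1 : `|z - r| <= 1.
  near: z; apply/nbhs0P; apply: filterS (nbhs0_le ltr01) => h /=.
  by rewrite [r + h - r]addrC addKr.
have dp_le : `|z - r| `^ p <= `|z - r| by rewrite ge1r_powR // d_gt0.
rewrite ler_pdivlMl ?powR_gt0 //; apply: le_trans (_ : c * `|z - r| <= _); last by near: z.
by rewrite mulrC ler_wpM2l.
Unshelve. all: by end_near.
Qed.

End Deflation.

Theorem mainTheorem1 (R : realType) (Z V : completeNormedModType R)
    (D : set Z) (F : Z -> V) (r : Z) (N : set Z) (H : Z -> Z -> V) (p : R) :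
  open D -> D r -> F r = 0 ->
  semismooth_at_with D F r N H ->
  (forall z, N z -> invertible_op (H z)) ->
  (exists Gamma : R, forall z, N z -> forall B : V -> Z,
      inverse_op (H z) B -> (opnorm B <= Gamma%:E)%E) ->
  1 <= p ->
  deflation_operator (fun z (v : V) => (`|z - r| `^ p)^-1 *: v) F r /\
  deflation_operator (fun z (v : V) => ((`|z - r| `^ p)^-1 + 1) *: v) F r.
Proof.
move=> _ _ Fr0 [_ oN Nr _ [_ newton]] H_inv [Gamma inv_bound] p_ge1.
have H_lb : \forall z \near r, forall h, `|h| <= Gamma * `|H z h|.
  apply: filterS (open_nbhs_nbhs (conj oN Nr)) => z Nz h; have [B HB] := H_inv z Nz.
  exact: inverse_op_norm_ge HB (inv_bound z Nz B HB) h.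
have [c c_gt0 F_ge] := newton_root_linear_lower_bound Fr0 (newton r Nr) H_lb.
have deflated := deflated_residual_ge (ltW c_gt0) p_ge1 F_ge.
have dp_gt0 z : z != r -> 0 < `|z - r| `^ p.
  by move=> zr; rewrite powR_gt0 // normr_gt0 subr_eq0.
split; apply: (deflation_operator_scaler _ c_gt0).
- by move=> z /dp_gt0 dp; rewrite invr_eq0 gt_eqF.
- apply: filterS deflated => z c_le /[dup] /dp_gt0 dp zr.
  by rewrite ger0_norm ?invr_ge0 ?(ltW dp) //; exact: c_le.
- by move=> z /dp_gt0 dp; rewrite gt_eqF // ltr_wpDl // invr_ge0 (ltW dp).
- apply: filterS deflated => z c_le /[dup] /dp_gt0 dp zr.
  rewrite ger0_norm ?addr_ge0 ?invr_ge0 ?(ltW dp) //; apply: le_trans (c_le zr) _.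
  by rewrite ler_wpM2r // lerDl.
Qed.
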